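(* Let $A=A_s+A_d\epsilon\in\mathbb{DC}^{m\times n}$. Then the DMPGI of $A$ exists if and only if all nonzero singular values of $A$ are appreciable (i.e. $A$ has no positive infinitesimal singular values). Furthermore, in that case, if $A=U\Sigma V^*$ is an SVD of $A$ with $\Sigma=\mathrm{diag}(\Sigma_r,O_{m-r,n-r})$, $\Sigma_r=\mathrm{diag}(\mu_1,\dots,\mu_r)$ with $\mu_1,\dots,\mu_r$ appreciable, then $$A^D=V\begin{bmatrix}\Sigma_r^{-1}&O\\O&O\end{bmatrix}U^*.$$
   Context: A dual number is $a=a_s+a_d\epsilon$ where $\epsilon\neq0$, $\epsilon^2=0$, and $\epsilon$ commutes with real/complex numbers; it is appreciable if $a_s\neq0$ and infinitesimal otherwise. For appreciable $\mu$, $\mu^{-1}=\mu_s^{-1}-\mu_s^{-2}\mu_d\epsilon$. For a dual complex matrix $A=A_s+A_d\epsilon$, $A^*=A_s^*+A_d^*\epsilon$; unitary means $U^*U=UU^*=I$. Every $A\in\mathbb{DC}^{m\times n}$ has an SVD $A=U\Sigma V^*$ with $U\in\mathbb{DC}^{m\times m},V\in\mathbb{DC}^{n\times n}$ unitary and $\Sigma\in\mathbb{D}^{m\times n}$ diagonal with diagonal entries $\mu_1\ge\dots\ge\mu_r$ positive appreciable dual reals, $\mu_{r+1}\ge\dots\ge\mu_t$ positive infinitesimal dual reals, and zeros, $r\le t\le\min\{m,n\}$; these singular values are unique (order on dual reals: $a>b$ iff $a_s>b_s$, or $a_s=b_s$ and $a_d>b_d$). The dual Moore–Penrose generalized inverse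 (DMPGI) of $A$, denoted $A^D$, is a matrix $X\in\mathbb{DC}^{n\times m}$ satisfying $AXA=A$, $XAX=X$, $(AX)^*=AX$, $(XA)^*=XA$. *)

From HB Require Import structures.
From mathcomp Require Import all_boot all_order all_algebra.
From mathcomp Require Import reals.
From mathcomp Require Import complex.
Set Implicit Arguments. Unset Strict Implicit. Unset Printing Implicit Defensive.
Import Order.TTheory GRing.Theory Num.Theory.
Local Open Scope ring_scope.

Section DualComplex.
Variable R : realType.
Local Notation C := (R[i]).

(* A dual complex number a = a_s + a_d eps is the pair (a_s, a_d). *)
Definition dual := (C * C)%type.

(* A dual complex matrix A = A_s + A_d eps is the pair (A_s, A_d). *)
Definition dmat (m n : nat) := ('M[C]_(m, n) * 'M[C]_(m, n))%type.

Definition dentry m n (A : dmat m n) (i : 'I_m) (j : 'I_n) : dual :=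
  (A.1 i j, A.2 i j).

Definition dmulmx m n p (A : dmat m n) (B : dmat n p) : dmat m p :=
  (A.1 *m B.1, A.1 *m B.2 + A.2 *m B.1).

Definition cadj m n (M : 'M[C]_(m, n)) : 'M[C]_(n, m) := (map_mx Num.conj M)^T.
Definition dadj m n (A : dmat m n) : dmat n m := (cadj A.1, cadj A.2).

Definition dI n : dmat n n := (1%:M, 0).

Definition dunitary n (U : dmat n n) : Prop :=
  dmulmx (dadj U) U = dI n /\ dmulmx U (dadj U) = dI n.

Definition dreal (a : dual) : bool := (a.1 \is Num.real) && (a.2 \is Num.real).

Definition dle (a b : dual) : bool := (a.1 < b.1) || ((a.1 == b.1) && (a.2 <= b.2)).

Definition appreciable (a : dual) : bool := a.1 != 0.
Definition dzero : dual := (0, 0).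

Definition dinv (a : dual) : dual := (a.1^-1, - (a.1 ^- 2) * a.2).

(* Sigma is an m x n dual real diagonal matrix whose diagonal entries are
   nonnegative and nonincreasing (for the dual order); this is exactly the
   shape mu_1 >= .. >= mu_r > 0 appreciable, mu_(r+1) >= .. >= mu_t > 0
   infinitesimal, followed by zeros. *)
Definition svd_diag m n (S : dmat m n) : Prop :=
  [/\ forall (i : 'I_m) (j : 'I_n), dreal (dentry S i j),
      forall (i : 'I_m) (j : 'I_n), (i : nat) <> j -> dentry S i j = dzero,
      forall (i : 'I_m) (j : 'I_n), (i : nat) = j -> dle dzero (dentry S i j) &
      forall (i i' : 'I_m) (j j' : 'I_n), (i : nat) = j -> (i' : nat) = j' ->
        (i <= i')%N -> dle (dentry S i' j') (dentry S i j)].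

Definition is_dSVD m n (A : dmat m n) (U : dmat m m) (S : dmat m n) (V : dmat n n)
  : Prop :=
  [/\ dunitary U, dunitary V, svd_diag S & A = dmulmx (dmulmx U S) (dadj V)].

Definition is_DMPGI m n (A : dmat m n) (X : dmat n m) : Prop :=
  [/\ dmulmx (dmulmx A X) A = A,
      dmulmx (dmulmx X A) X = X,
      dadj (dmulmx A X) = dmulmx A X &
      dadj (dmulmx X A) = dmulmx X A].

(* diag(Sigma_r^{-1}, O) : the n x m matrix whose (j,i) diagonal entry is the
   inverse of the (i,j) diagonal entry of Sigma when that entry is appreciable,
   and 0 otherwise. *)
Definition svd_pinv_diag m n (S : dmat m n) : dmat n m :=
  (\matrix_(j < n, i < m)
     (if ((i : nat) == j) && appreciable (dentry S i j) then (dinv (dentry S i j)).1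
      else 0),
   \matrix_(j < n, i < m)
     (if ((i : nat) == j) && appreciable (dentry S i j) then (dinv (dentry S i j)).2
      else 0)).

End DualComplex.

From HB Require Import structures.
From mathcomp Require Import all_boot all_order all_algebra.
From mathcomp Require Import reals.
From mathcomp Require Import complex.
From mathcomp Require Import ring.
Set Implicit Arguments. Unset Strict Implicit. Unset Printing Implicit Defensive.
Import Order.TTheory GRing.Theory Num.Theory.
Local Open Scope ring_scope.

(* 1. Dual matrices with the dual product and conjugate transpose form an
      associative *-algebra; from this alone a DMPGI is unique, and the
      DMPGI property is invariant under unitary transformations:
      if X is a DMPGI of A then V X U^* is a DMPGI of U A V^*.
   2. A matrix is "diagonal by d" when its (k,k) entries are d k and all
      other entries vanish.  Products, sums and adjoints of such matrices
      are again diagonal, with the entrywise operations on the diagonal.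
   3. Entrywise dual arithmetic: for a dual number a that is zero or
      appreciable, a * a^+ * a = a, a^+ * a * a^+ = a^+ and a * a^+ is
      self-conjugate, with a^+ the inverse of a (or 0).  Hence a diagonal
      D whose nonzero entries are appreciable has the diagonal DMPGI D^+.
      Conversely, if D X D = D for some X, comparing dual parts of the
      (k,k) entry shows that an entry with zero standard part is zero.
   4. The theorem: transport S <-> A through the unitaries U and V, and
      conclude with uniqueness. *)

Section DualMatrixAlgebra.
Variable R : realType.
Local Notation C := (R[i]).

Lemma dmulmxA m n p q (A : dmat R m n) (B : dmat R n p) (D : dmat R p q) :
  dmulmx A (dmulmx B D) = dmulmx (dmulmx A B) D.
Proof.
case: A => A1 A2; case: B => B1 B2; case: D => D1 D2; rewrite /dmulmx /=.
by rewrite !mulmxA !mulmxDr !mulmxDl !mulmxA addrA.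
Qed.

Lemma dmul1mx m n (A : dmat R m n) : dmulmx (dI R m) A = A.
Proof. by case: A => A1 A2; rewrite /dmulmx /dI /= !mul1mx mul0mx addr0. Qed.

Lemma dmulmx1 m n (A : dmat R m n) : dmulmx A (dI R n) = A.
Proof. by case: A => A1 A2; rewrite /dmulmx /dI /= !mulmx1 mulmx0 add0r. Qed.

Lemma cadjM m n p (A : 'M[C]_(m, n)) (B : 'M[C]_(n, p)) :
  cadj (A *m B) = cadj B *m cadj A.
Proof. by rewrite /cadj (map_mxM Num.conj) trmx_mul. Qed.

Lemma cadjD m n (A B : 'M[C]_(m, n)) : cadj (A + B) = cadj A + cadj B.
Proof. by rewrite /cadj (map_mxD Num.conj) linearD. Qed.

Lemma cadjK m n (A : 'M[C]_(m, n)) : cadj (cadj A) = A.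
Proof. by apply/matrixP => i j; rewrite /cadj !mxE conjCK. Qed.

Lemma dadjM m n p (A : dmat R m n) (B : dmat R n p) :
  dadj (dmulmx A B) = dmulmx (dadj B) (dadj A).
Proof.
case: A => A1 A2; case: B => B1 B2; rewrite /dmulmx /dadj /=.
by rewrite !cadjM cadjD !cadjM addrC.
Qed.

Lemma dadjK m n (A : dmat R m n) : dadj (dadj A) = A.
Proof. by case: A => A1 A2; rewrite /dadj /= !cadjK. Qed.

Lemma dunitary_adj n (U : dmat R n n) : dunitary U -> dunitary (dadj U).
Proof. by case=> hl hr; split; rewrite dadjK. Qed.

Lemma dunitary_cancel n p q (U : dmat R n n) (M : dmat R p n) (N : dmat R n q) :
  dunitary U -> dmulmx (dmulmx M (dadj U)) (dmulmx U N) = dmulmx M N.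
Proof. by case=> hl _; rewrite -dmulmxA (dmulmxA (dadj U)) hl dmul1mx. Qed.

Lemma dunitary_conj_cancel m n (U : dmat R m m) (S : dmat R m n) (V : dmat R n n) :
  dunitary U -> dunitary V ->
  dmulmx (dmulmx (dadj U) (dmulmx (dmulmx U S) (dadj V))) V = S.
Proof.
by case=> hU _ [hV _]; rewrite !dmulmxA hU dmul1mx -dmulmxA hV dmulmx1.
Qed.

(* The classical uniqueness argument, valid in any ring with involution:
   X = X A X = X (A X)^* = ... = (X A) Y and likewise Y = (X A) Y. *)
Lemma dmpgi_uniq m n (A : dmat R m n) X Y :
  is_DMPGI A X -> is_DMPGI A Y -> X = Y.
Proof.
case=> [x1 x2 x3 x4] [y1 y2 y3 y4].
have eA1 : dadj A = dmulmx (dadj A) (dmulmx A Y) by rewrite -y3 -dadjM y1.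
have eA2 : dadj A = dmulmx (dmulmx X A) (dadj A).
  by rewrite -x4 -dadjM dmulmxA x1.
have hX : X = dmulmx (dmulmx X A) Y.
  transitivity (dmulmx X (dadj (dmulmx A X))); first by rewrite x3 dmulmxA x2.
  by rewrite dadjM eA1 (dmulmxA (dadj X)) -dadjM x3 !dmulmxA x2.
have hY : Y = dmulmx (dmulmx X A) Y.
  transitivity (dmulmx (dadj (dmulmx Y A)) Y); first by rewrite y4 y2.
  by rewrite dadjM eA2 -(dmulmxA (dmulmx X A) (dadj A)) -dadjM y4 -dmulmxA y2.
by rewrite hX -hY.
Qed.

Lemma dmpgi_unitary m n (A : dmat R m n) (X : dmat R n m)
    (U : dmat R m m) (V : dmat R n n) :
  dunitary U -> dunitary V -> is_DMPGI A X ->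
  is_DMPGI (dmulmx (dmulmx U A) (dadj V)) (dmulmx (dmulmx V X) (dadj U)).
Proof.
move=> hU hV [h1 h2 h3 h4].
have AX : dmulmx (dmulmx (dmulmx U A) (dadj V)) (dmulmx (dmulmx V X) (dadj U))
          = dmulmx (dmulmx U (dmulmx A X)) (dadj U).
  by rewrite -(dmulmxA V) dunitary_cancel // !dmulmxA.
have XA : dmulmx (dmulmx (dmulmx V X) (dadj U)) (dmulmx (dmulmx U A) (dadj V))
          = dmulmx (dmulmx V (dmulmx X A)) (dadj V).
  by rewrite -(dmulmxA U) dunitary_cancel // !dmulmxA.
split.
- by rewrite AX -(dmulmxA U A) dunitary_cancel // -(dmulmxA U) (dmulmxA _ A) h1.
- by rewrite XA -(dmulmxA V X) dunitary_cancel // -(dmulmxA V) (dmulmxA _ X) h2.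
- by rewrite AX 2!dadjM dadjK h3 dmulmxA.
- by rewrite XA 2!dadjM dadjK h4 dmulmxA.
Qed.

End DualMatrixAlgebra.

Section DiagonalMatrices.
Variable R : realType.
Local Notation C := (R[i]).

Definition diag_by p q (M : 'M[C]_(p, q)) (f : nat -> C) : Prop :=
  forall (i : 'I_p) (j : 'I_q), M i j = if (i : nat) == j then f i else 0.

(* The inner dimension q truncates the diagonal of a product. *)
Lemma diag_by_mul p q r (M : 'M[C]_(p, q)) (N : 'M[C]_(q, r)) f g :
  diag_by M f -> diag_by N g ->
  diag_by (M *m N) (fun k => if (k < q)%N then f k * g k else 0).
Proof.
move=> hM hN i k; rewrite mxE /=; case: (ltnP i q) => [iq|qi].
  rewrite (bigD1 (Ordinal iq)) //= big1 => [|j nj]; last first.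
    rewrite hM; case: eqP => [eij|_]; last by rewrite mul0r.
    by case/eqP: nj; apply: val_inj.
  by rewrite hM hN /= eqxx addr0; case: eqP; rewrite ?mulr0.
rewrite if_same big1 // => j _; rewrite hM; case: eqP => [eij|_]; last first.
  by rewrite mul0r.
by move: (ltn_ord j); rewrite -eij ltnNge qi.
Qed.

Lemma diag_by_add p q (M N : 'M[C]_(p, q)) f g :
  diag_by M f -> diag_by N g -> diag_by (M + N) (fun k => f k + g k).
Proof. by move=> hM hN i j; rewrite mxE hM hN; case: eqP; rewrite ?addr0. Qed.

Lemma diag_by_adj p q (M : 'M[C]_(p, q)) f :
  diag_by M f -> diag_by (cadj M) (fun k => (f k)^*).
Proof.
move=> hM j i; rewrite /cadj !mxE hM eq_sym.
by case: eqP => [->|_]; rewrite ?rmorph0.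
Qed.

Lemma diag_by_eq p q (M N : 'M[C]_(p, q)) f g :
  diag_by M f -> diag_by N g ->
  (forall k, (k < p)%N -> (k < q)%N -> f k = g k) -> M = N.
Proof.
move=> hM hN hfg; apply/matrixP => i j; rewrite hM hN.
by case: eqP => // eij; rewrite hfg // eij.
Qed.

End DiagonalMatrices.

Lemma mulmx_zero_row (T : pzRingType) m n p (P : 'M[T]_(m, n)) (Q : 'M[T]_(n, p))
    i k :
  (forall l, P i l = 0) -> (P *m Q) i k = 0.
Proof. by move=> h; rewrite mxE big1 // => l _; rewrite h mul0r. Qed.

Lemma mulmx_zero_col (T : pzRingType) m n p (P : 'M[T]_(m, n)) (Q : 'M[T]_(n, p))
    i k :
  (forall l, Q l k = 0) -> (P *m Q) i k = 0.
Proof. by move=> h; rewrite mxE big1 // => l _; rewrite h mulr0. Qed.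

Section DualDiagonal.
Variable R : realType.
Local Notation dual := (dual R).
Local Notation dzero := (dzero R).

Definition dmul (a b : dual) : dual := (a.1 * b.1, a.1 * b.2 + a.2 * b.1).
Definition dconj (a : dual) : dual := (a.1^*, a.2^*).
Definition dpinv (a : dual) : dual := if appreciable a then dinv a else dzero.
Definition dproj (a : dual) : dual := if appreciable a then (1, 0) else dzero.

Definition nonzero_appreciable p q (d : nat -> dual) : Prop :=
  forall k, (k < p)%N -> (k < q)%N -> d k <> dzero -> appreciable (d k).

Lemma dmul_pinvr a : dmul a (dpinv a) = dproj a.
Proof.
case: a => x y; rewrite /dmul /dpinv /dproj /dinv /appreciable /=.
case: eqP => [_|x0] /=; first by rewrite !mulr0 addr0.
by congr (_, _); [rewrite mulfV //; exact/eqP | field; exact/eqP].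
Qed.

Lemma dmul_pinvl a : dmul (dpinv a) a = dproj a.
Proof.
case: a => x y; rewrite /dmul /dpinv /dproj /dinv /appreciable /=.
case: eqP => [_|x0] /=; first by rewrite !mul0r addr0.
by congr (_, _); [rewrite mulVf //; exact/eqP | field; exact/eqP].
Qed.

(* The only place where the hypothesis is needed: a non-appreciable a
   must be zero for a a^+ a = a to hold. *)
Lemma dmul_proj a : (a <> dzero -> appreciable a) -> dmul (dproj a) a = a.
Proof.
case: a => x y; rewrite /dmul /dproj /appreciable /=.
case: eqP => [x0 ha|_ _] /=; last by rewrite !mul1r mul0r addr0.
case: (eqVneq y 0) => [y0|ny]; first by rewrite x0 y0 !mul0r addr0.
suff /ha : (x, y) <> dzero by [].
by move=> [_ y0]; rewrite y0 eqxx in ny.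
Qed.

Lemma dmul_proj_pinv a : dmul (dproj a) (dpinv a) = dpinv a.
Proof.
case: a => x y; rewrite /dmul /dpinv /dproj /appreciable /=.
by case: eqP => _ /=; rewrite ?mul1r ?mul0r ?addr0.
Qed.

Lemma dconj_proj a : dconj (dproj a) = dproj a.
Proof. by rewrite /dconj /dproj; case: ifP => _ /=; rewrite ?rmorph1 rmorph0. Qed.

Lemma dconj0 : dconj dzero = dzero.
Proof. by rewrite /dconj /= rmorph0. Qed.

Definition ddiag_by p q (D : dmat R p q) (d : nat -> dual) : Prop :=
  diag_by D.1 (fun k => (d k).1) /\ diag_by D.2 (fun k => (d k).2).

Lemma ddiag_by_mul p q r (D : dmat R p q) (E : dmat R q r) d e :
  ddiag_by D d -> ddiag_by E e ->
  ddiag_by (dmulmx D E) (fun k => if (k < q)%N then dmul (d k) (e k) else dzero).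
Proof.
case=> hD1 hD2 [hE1 hE2]; split=> i k.
  by rewrite (diag_by_mul hD1 hE1) /=; case: ltnP.
rewrite (diag_by_add (diag_by_mul hD1 hE2) (diag_by_mul hD2 hE1)) /=.
by case: ltnP; rewrite ?addr0.
Qed.

Lemma ddiag_by_adj p q (D : dmat R p q) d :
  ddiag_by D d -> ddiag_by (dadj D) (fun k => dconj (d k)).
Proof. by case=> hD1 hD2; split; apply: diag_by_adj. Qed.

Lemma ddiag_by_eq p q (D E : dmat R p q) d e :
  ddiag_by D d -> ddiag_by E e ->
  (forall k, (k < p)%N -> (k < q)%N -> d k = e k) -> D = E.
Proof.
case: D E => [D1 D2] [E1 E2] [hD1 hD2] [hE1 hE2] hde.
by congr (_, _); [apply: diag_by_eq hD1 hE1 _ | apply: diag_by_eq hD2 hE2 _]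
  => k kp kq; rewrite hde.
Qed.

Lemma diag_dmpgi p q (D : dmat R p q) (E : dmat R q p) d :
  ddiag_by D d -> ddiag_by E (fun k => dpinv (d k)) ->
  nonzero_appreciable p q d -> is_DMPGI D E.
Proof.
move=> hD hE hd.
have hDE := ddiag_by_mul hD hE; have hED := ddiag_by_mul hE hD.
split.
- apply: ddiag_by_eq (ddiag_by_mul hDE hD) hD _ => k kp kq /=.
  by rewrite kp kq dmul_pinvr dmul_proj // => /hd; apply.
- apply: ddiag_by_eq (ddiag_by_mul hED hE) hE _ => k kq kp /=.
  by rewrite kp kq dmul_pinvl dmul_proj_pinv.
- apply: ddiag_by_eq (ddiag_by_adj hDE) hDE _ => k _ _ /=.
  by case: ifP => _; rewrite ?dmul_pinvr ?dconj_proj ?dconj0.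
- apply: ddiag_by_eq (ddiag_by_adj hED) hED _ => k _ _ /=.
  by case: ifP => _; rewrite ?dmul_pinvl ?dconj_proj ?dconj0.
Qed.

(* Necessity for diagonal matrices: if D Y D = D and the (k,k) entry has
   zero standard part, then row k and column k of D_s vanish, so the dual
   part of the (k,k) entry of D Y D, which equals (D_d)_kk, is zero. *)
Lemma inner_inverse_appreciable p q (D : dmat R p q) (Y : dmat R q p) d :
  ddiag_by D d -> dmulmx (dmulmx D Y) D = D -> nonzero_appreciable p q d.
Proof.
move=> [hD1 hD2] hDYD k kp kq nz; apply/eqP => s0; apply: nz.
pose i := Ordinal kp; pose j := Ordinal kq.
have row0 l : D.1 i l = 0 by rewrite hD1 /= s0 if_same.
have col0 l : D.1 l j = 0 by rewrite hD1 /=; case: eqP => // ->.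
have t0 : (d k).2 = 0.
  have := congr1 (fun M : dmat R p q => M.2 i j) hDYD; rewrite /= hD2 /= eqxx.
  rewrite mxE (mulmx_zero_col _ _ col0) addr0 => <-.
  by apply: mulmx_zero_row => l; apply: mulmx_zero_row.
by move: s0 t0; case: (d k) => x y /= -> ->.
Qed.

End DualDiagonal.

Section SVDDiagonal.
Variables (R : realType) (m n : nat) (S : dmat R m n).

Definition diag_entry (k : nat) : dual R :=
  match (insub k : option 'I_m), (insub k : option 'I_n) with
  | Some i, Some j => dentry S i j
  | _, _ => dzero R
  end.

Lemma diag_entryE (i : 'I_m) (j : 'I_n) :
  (i : nat) = j -> diag_entry i = dentry S i j.
Proof. by move=> e; rewrite /diag_entry {2}e !valK. Qed.

Lemma svd_diag_entries : svd_diag S -> ddiag_by S diag_entry.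
Proof.
case=> _ hoff _ _; split=> i j;
  by case: eqP => [e|ne]; [rewrite (diag_entryE e) | case: (hoff i j ne)].
Qed.

Lemma svd_pinv_entries :
  ddiag_by (svd_pinv_diag S) (fun k => dpinv (diag_entry k)).
Proof.
split=> j i; rewrite !mxE [(j : nat) == i]eq_sym;
  by case: eqP => [e|_] //=; rewrite -e (diag_entryE e) /dpinv; case: ifP.
Qed.

Lemma nonzero_appreciableE :
  (forall (i : 'I_m) (j : 'I_n), (i : nat) = j ->
     dentry S i j <> dzero R -> appreciable (dentry S i j)) <->
  nonzero_appreciable m n diag_entry.
Proof.
split=> h.
  move=> k km kn.
  by rewrite (diag_entryE (i := Ordinal km) (j := Ordinal kn)) //; apply: h.
move=> i j e; rewrite -(diag_entryE e).
by apply: h; [exact: ltn_ord | rewrite e; exact: ltn_ord].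
Qed.

End SVDDiagonal.

Unset Implicit Arguments.
Set Strict Implicit.

Theorem theorem5p1 (R : realType) (m n : nat) (A : dmat R m n)
    (U : dmat R m m) (S : dmat R m n) (V : dmat R n n) :
  is_dSVD A U S V ->
  ((exists X : dmat R n m, is_DMPGI A X) <->
     (forall (i : 'I_m) (j : 'I_n), (i : nat) = j ->
        dentry S i j <> dzero R -> appreciable (dentry S i j))) /\
  ((forall (i : 'I_m) (j : 'I_n), (i : nat) = j ->
        dentry S i j <> dzero R -> appreciable (dentry S i j)) ->
   forall X : dmat R n m, is_DMPGI A X ->
     X = dmulmx (dmulmx V (svd_pinv_diag S)) (dadj U)).
Proof.
move=> [hU hV hS eA].
have hSd := svd_diag_entries hS.
have sufficient : nonzero_appreciable m n (diag_entry S) ->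
    is_DMPGI A (dmulmx (dmulmx V (svd_pinv_diag S)) (dadj U)).
  move=> h; rewrite eA; apply: dmpgi_unitary hU hV _.
  exact: diag_dmpgi hSd (svd_pinv_entries S) h.
have necessary X : is_DMPGI A X -> nonzero_appreciable m n (diag_entry S).
  move=> hX.
  have [hSYS _ _ _] := dmpgi_unitary (dunitary_adj hU) (dunitary_adj hV) hX.
  rewrite dadjK eA dunitary_conj_cancel // in hSYS.
  exact: inner_inverse_appreciable hSd hSYS.
split; first split.
- by case=> X /necessary/nonzero_appreciableE.
- by move/nonzero_appreciableE/sufficient=> hX0; eexists; exact: hX0.
- by move/nonzero_appreciableE/sufficient=> hX0 X hX; exact: dmpgi_uniq hX hX0.
Qed.
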